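(* Let $(A,\leq,\cdot,/)$ be a narhoop and $\theta$ a unital congruence on $(A,\cdot,/)$. Then: (1) $N_\theta$ is closed under $\cdot$ and $/$ (i.e. is a subnarhoop of $A$); (2) for all $x,y\in A$, if $x\leq y$ and $x\in N_\theta$ then $y\in N_\theta$; (3) $\phi(N_\theta)\subseteq N_\theta$ for every $\phi\in\mathrm{Inn}(A)$.
   Context: Write $xy$ for $x\cdot y$; $\cdot$ binds more strongly than $/$, and $/$ binds more strongly than $\sqcap$, where $x\sqcap y := (x/y)y$. A right-residuated magma is a structure $(A,\leq,\cdot,/)$ where $(A,\leq)$ is a poset and $xy\leq z\iff x\leq z/y$ for all $x,y,z\in A$. A narhoop is a right-residuated magma such that for all $x,y$: $x\leq y\iff x\sqcap y = x = y\sqcap x$. A congruence $\theta$ on $(A,\cdot,/)$ is unital if $x/x\mathrel{\theta} y/y$ for all $x,y\in A$. For a unital congruence $\theta$, $N_\theta=\{x\in A\mid x\mathrel{\theta} y/y \text{ for some (equivalently, all) } y\in A\}$. For $x,y\in A$ define maps $A\to A$ by $\phi_{1,x,y}(z)=((zx)y)/(xy)$, $\phi_{2,x,y}(z)=((zx)/y)/(x/y)$, $\phi_{3,x,y}(z)=(x(zy))/(xy)$, $\phi_{4,x,y}(z)=(x/(zy))/(x/y)$, $\phi_{5,x,y}(z)=(xy)/(x(zy))$, $\phi_{6,x,y}(z)=(x/y)/(x/(zy))$. $\mathrm{Inn}(A)$ is the semigroup of maps $A\to A$ under composition generated by all $\phi_{i,x,y}$, $i=1,\dots,6$, $x,y\in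 A$. *)

From Stdlib Require Import RelationClasses.

Record RRMagma := {
  carrier :> Type;
  le : carrier -> carrier -> Prop;
  mul : carrier -> carrier -> carrier;
  rdiv : carrier -> carrier -> carrier;
  le_refl : forall x, le x x;
  le_antisym : forall x y, le x y -> le y x -> x = y;
  le_trans : forall x y z, le x y -> le y z -> le x z;
  residuation : forall x y z, le (mul x y) z <-> le x (rdiv z y)
}.

Arguments le {r}.
Arguments mul {r}.
Arguments rdiv {r}.

Definition rmeet {A : RRMagma} (x y : A) : A := mul (rdiv x y) y.

Definition narhoop (A : RRMagma) : Prop :=
  forall x y : A, le x y <-> (rmeet x y = x /\ x = rmeet y x).

Definition congruence {A : RRMagma} (th : A -> A -> Prop) : Prop :=
  Equivalence th /\
  (forall x x' y y', th x x' -> th y y' -> th (mul x y) (mul x' y')) /\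
  (forall x x' y y', th x x' -> th y y' -> th (rdiv x y) (rdiv x' y')).

Definition unital {A : RRMagma} (th : A -> A -> Prop) : Prop :=
  forall x y : A, th (rdiv x x) (rdiv y y).

Definition Ntheta {A : RRMagma} (th : A -> A -> Prop) (x : A) : Prop :=
  exists y : A, th x (rdiv y y).

Definition phi1 {A : RRMagma} (x y : A) : A -> A :=
  fun z => rdiv (mul (mul z x) y) (mul x y).
Definition phi2 {A : RRMagma} (x y : A) : A -> A :=
  fun z => rdiv (rdiv (mul z x) y) (rdiv x y).
Definition phi3 {A : RRMagma} (x y : A) : A -> A :=
  fun z => rdiv (mul x (mul z y)) (mul x y).
Definition phi4 {A : RRMagma} (x y : A) : A -> A :=
  fun z => rdiv (rdiv x (mul z y)) (rdiv x y).
Definition phi5 {A : RRMagma} (x y : A) : A -> A :=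
  fun z => rdiv (mul x y) (mul x (mul z y)).
Definition phi6 {A : RRMagma} (x y : A) : A -> A :=
  fun z => rdiv (rdiv x y) (rdiv x (mul z y)).

Inductive Inn {A : RRMagma} : (A -> A) -> Prop :=
| Inn_phi1 : forall x y, Inn (phi1 x y)
| Inn_phi2 : forall x y, Inn (phi2 x y)
| Inn_phi3 : forall x y, Inn (phi3 x y)
| Inn_phi4 : forall x y, Inn (phi4 x y)
| Inn_phi5 : forall x y, Inn (phi5 x y)
| Inn_phi6 : forall x y, Inn (phi6 x y)
| Inn_comp : forall f g, Inn f -> Inn g -> Inn (fun z => f (g z)).

(* The class [N] of the idempotent-like elements [a/a] acts as a left unit modulo [theta]:
   [(a/a) b = b] holds on the nose in a narhoop, so [z b] is congruent to [b] whenever [z]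
   lies in [N].  Closure under the operations and under every inner map follows, since
   each [phi_{i,x,y} z] with [z] in [N] has the shape [u/v] with [u] and [v] congruent.  For upward
   closure, [x <= y] forces [y/x = x/x], and [y] splits as [(y/c) c] with [c = (y x)/x],
   where both factors are congruent to [x/x]. *)

From Stdlib Require Import RelationClasses Morphisms Setoid.

Section ResiduatedMagma.

Context {A : RRMagma}.
Implicit Types a b c : A.

Lemma le_mul_divK a b : le (mul (rdiv a b) b) a.
Proof. apply residuation, le_refl. Qed.

Lemma le_div_mulK a b : le a (rdiv (mul a b) b).
Proof. apply residuation, le_refl. Qed.

Lemma le_mul2r {a b} c : le a b -> le (mul a c) (mul b c).
Proof. intros Hab. apply residuation, le_trans with b; [exact Hab | apply le_div_mulK]. Qed.

Lemma le_div2r {a b} c : le a b -> le (rdiv a c) (rdiv b c).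
Proof. intros Hab. apply residuation, le_trans with a; [apply le_mul_divK | exact Hab]. Qed.

Hypothesis hA : narhoop A.

Lemma narhoop_meet_le {a b} : le a b -> mul (rdiv a b) b = a.
Proof. intros Hab. apply hA, Hab. Qed.

Lemma narhoop_divKl a : mul (rdiv a a) a = a.
Proof. apply narhoop_meet_le, le_refl. Qed.

Lemma narhoop_div_le {a b} : le a b -> rdiv b a = rdiv a a.
Proof.
  intros Hab. apply le_antisym; [| exact (le_div2r a Hab)].
  apply residuation. destruct (proj1 (hA a b) Hab) as [_ Hmeet].
  unfold rmeet in Hmeet. rewrite <- Hmeet. apply le_refl.
Qed.

End ResiduatedMagma.

Section UnitalCongruence.

Context {A : RRMagma} {th : A -> A -> Prop}.
Hypothesis hA : narhoop A.
Hypothesis hcong : congruence th.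
Hypothesis hunit : unital th.
Implicit Types a b c x y z : A.

Local Instance th_equiv : Equivalence th := proj1 hcong.

Local Instance mul_th_proper : Proper (th ==> th ==> th) mul.
Proof. intros a a' Ha b b' Hb. apply hcong; assumption. Qed.

Local Instance rdiv_th_proper : Proper (th ==> th ==> th) rdiv.
Proof. intros a a' Ha b b' Hb. apply hcong; assumption. Qed.

Lemma Ntheta_div_self a : Ntheta th (rdiv a a).
Proof. exists a. reflexivity. Qed.

Lemma NthetaP {z} a : Ntheta th z -> th z (rdiv a a).
Proof. intros [b Hb]. rewrite Hb. apply hunit. Qed.

Lemma Ntheta_th {z w} : Ntheta th z -> Ntheta th w -> th z w.
Proof. intros Hz [b Hb]. rewrite Hb. apply NthetaP, Hz. Qed.

Local Instance Ntheta_proper : Proper (th ==> iff) (Ntheta th).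
Proof.
  intros z z' Hz. split; intros [b Hb]; exists b; [rewrite <- Hz | rewrite Hz]; exact Hb.
Qed.

Lemma Ntheta_div_th a b : th a b -> Ntheta th (rdiv a b).
Proof. intros Hab. rewrite Hab. apply Ntheta_div_self. Qed.

Lemma Ntheta_mull {z} a : Ntheta th z -> th (mul z a) a.
Proof.
  intros Hz. rewrite (NthetaP a Hz). rewrite (narhoop_divKl hA a). reflexivity.
Qed.

Lemma Ntheta_mul {x y} : Ntheta th x -> Ntheta th y -> Ntheta th (mul x y).
Proof. intros Hx Hy. rewrite (Ntheta_mull y Hx). exact Hy. Qed.

Lemma Ntheta_div {x y} : Ntheta th x -> Ntheta th y -> Ntheta th (rdiv x y).
Proof. intros Hx Hy. apply Ntheta_div_th, Ntheta_th; assumption. Qed.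

Lemma Ntheta_le x y : le x y -> Ntheta th x -> Ntheta th y.
Proof.
  intros Hxy Hx.
  set (c := rdiv (mul y x) x).
  assert (Hsplit : mul (rdiv y c) c = y) by apply (narhoop_meet_le hA), le_div_mulK.
  assert (Hc : Ntheta th c).
  { assert (Hxx : th (mul x x) x) by exact (Ntheta_mull x Hx).
    assert (Hcx : th c (rdiv (mul y x) (mul x x))) by (unfold c; rewrite Hxx; reflexivity).
    rewrite Hcx, (narhoop_div_le hA (le_mul2r x Hxy)). apply Ntheta_div_self. }
  rewrite <- Hsplit. apply Ntheta_mul; [| exact Hc].
  rewrite (Ntheta_th Hc Hx), (narhoop_div_le hA Hxy). apply Ntheta_div_self.
Qed.

Lemma Inn_Ntheta phi : Inn phi -> forall z, Ntheta th z -> Ntheta th (phi z).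
Proof.
  intros Hphi. induction Hphi as [x y|x y|x y|x y|x y|x y|f g _ IHf _ IHg];
    intros z Hz; [.. | exact (IHf _ (IHg _ Hz))];
    apply Ntheta_div_th; [.. | symmetry | symmetry];
    rewrite (Ntheta_mull _ Hz); reflexivity.
Qed.

End UnitalCongruence.

Theorem mainTheorem12 (A : RRMagma) (hA : narhoop A)
  (th : A -> A -> Prop) (hcong : congruence th) (hunit : unital th) :
  (forall x y : A, Ntheta th x -> Ntheta th y ->
     Ntheta th (mul x y) /\ Ntheta th (rdiv x y)) /\
  (forall x y : A, le x y -> Ntheta th x -> Ntheta th y) /\
  (forall phi : A -> A, Inn phi -> forall z : A, Ntheta th z -> Ntheta th (phi z)).
Proof.
  split; [| split].
  - intros x y Hx Hy.
    exact (conj (Ntheta_mul hA hcong hunit Hx Hy) (Ntheta_div hcong hunit Hx Hy)).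
  - exact (Ntheta_le hA hcong hunit).
  - exact (Inn_Ntheta hA hcong hunit).
Qed.
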